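(* Let $IS$ be an ISRL with model $M$ and $\varphi$ a formula of the $A\bar BN$ fragment of EHS$^{+}$. If $I,I'$ are intervals of $M$ with $MCT_I^\varphi=MCT_{I'}^\varphi$, then $M,I\models\varphi$ if and only if $M,I'\models\varphi$.
   Context: **Regular expressions.** For a finite alphabet $X$, $RE_X$ is the set of regular expressions $e ::= \emptyset \mid \epsilon \mid s \mid e;e \mid e+e \mid e^*$ with $s\in X$. $L(e)$ denotes the standard language of $e$. **ISRL.** Fix agents $A=\{0,\dots,m\}$ and a finite set $\mathit{Var}$ of propositional variables. An ISRL is $IS=(\{L_i\},\{l_i^0\},\{ACT_i\},\{P_i\},\{t_i\},\lambda)$ where, for each $i\in A$: - $L_i$ is a finite set of local states and $l_i^0\in L_i$; - $ACT_i$ is a finite set of actions and $P_i:L_i\to 2^{ACT_i}$; - $t_i\subseteq L_i\times ACT\times L_i$, with $ACT=ACT_0\times\dots\times ACT_m$; - $\lambda:\mathit{Var}\to RE_G$, where $G=L_0\times\dots\times L_m$. $t^G((l_0,\dots,l_m),(l'_0,\dots,l'_m))$ holds iff some $(a_0,\dots,a_m)\in ACT$ has $a_i\in P_i(l_i)$ and $(l_i,(a_0,\dots,a_m),l'_i)\in t_i$ for all $i$. **Model of $IS$.** - States $S$ are the nonempty sequences $g_0\dots g_k$ with $g_0=(l_0^0,\dots,l_m^0)$ and $t^G(g_j,g_{j+1})$ for all $j<k$. - $t(g_0\dots g_k,g'_0\dots g'_l)$ iff $l=k+1$ and $g_j=g'_j$ for all $j\le k$. - $g_0\dots g_k\sim_i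 g'_0\dots g'_l$ iff $g_k,g'_l$ have the same $i$-th component. - $\mathrm{g}(g_0\dots g_k)=g_k$. **Intervals.** An interval is a nonempty sequence $I=s_1\dots s_n$ of states with $t(s_j,s_{j+1})$; $\mathit{first}(I)=s_1$, $\mathit{last}(I)=s_n$, $\mathrm{g}(I)=\mathrm{g}(s_1)\dots\mathrm{g}(s_n)$, and $\mathit{pi}(I)$ iff $n=1$. **Relations.** - $I\sim_i I'$ iff $|I|=|I'|$ and the states are pointwise $\sim_i$-related; $\sim_\Gamma$ is the transitive closure of $\bigcup_{i\in\Gamma}\sim_i$. - $I R_A I'$ iff $\mathit{first}(I')=\mathit{last}(I)$. - $I R_{\bar B} I'$ iff $I'=II_1$ for some interval $I_1$. - $I R_N I'$ iff $t(\mathit{last}(I),\mathit{first}(I'))$. - $R_{K_i}=\sim_i$, $R_{C_\Gamma}=\sim_\Gamma$, $R_{\langle A\rangle}=R_A$, $R_{\langle\bar B\rangle}=R_{\bar B}$, $R_{\langle N\rangle}=R_N$. **$A\bar BN$ fragment of EHS$^{+}$.** Syntax: $\varphi::=\mathit{pi}\mid p\mid\neg\varphi\mid\varphi\wedge\varphi\mid K_i\varphi\mid C_\Gamma\varphi\mid\langle A\rangle\varphi\mid\langle\bar B\rangle\varphi\mid\langle N\rangle\varphi$. Semantics: - $M,I\models\mathit{pi}$ iff $|I|=1$; - $M,I\models p$ iff $\mathrm{g}(I)\in L(\lambda(p))$; - Boolean connectives as usual; - for each modality $X$ above, the universal ones $K_i,C_\Gamma$ require the subformula on all $R_X$-related intervals,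 and the existential ones $\langle A\rangle,\langle\bar B\rangle,\langle N\rangle$ require it on some $R_X$-related interval. A top-level sub-formula of $\varphi$ is a sub-formula of the form $X\psi$ with $X$ a modality that is not in the scope of any modality. **Automata.** For $p\in\mathit{Var}$ let $\mathcal A^p$ be the minimal complete deterministic finite automaton for $L(\lambda(p))$ over alphabet $G$. $\mathcal A_I$ maps each $p$ to the state of $\mathcal A^p$ reached after reading $\mathrm{g}(I)$. **Modal context tree.** $MCT_I^\varphi$ is defined by recursion on $\varphi$ as the pair consisting of: - the root label $(\mathrm{g}(\mathit{first}(I)),\mathrm{g}(\mathit{last}(I)),\mathit{pi}(I),\mathcal A_I)$; - for each top-level sub-formula $X\psi$ of $\varphi$, the set $\{MCT_{I'}^\psi : I R_X I'\}$. *)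

From mathcomp Require Import all_boot.
Set Implicit Arguments. Unset Strict Implicit. Unset Printing Implicit Defensive.

Inductive regex (X : Type) : Type :=
| RE_empty : regex X
| RE_eps : regex X
| RE_sym : X -> regex X
| RE_cat : regex X -> regex X -> regex X
| RE_plus : regex X -> regex X -> regex X
| RE_star : regex X -> regex X.
Arguments RE_empty {X}. Arguments RE_eps {X}.

Fixpoint lang (X : Type) (e : regex X) (w : seq X) : Prop :=
  match e with
  | RE_empty => False
  | RE_eps => w = [::]
  | RE_sym s => w = [:: s]
  | RE_cat e1 e2 => exists w1 w2, w = w1 ++ w2 /\ lang e1 w1 /\ lang e2 w2
  | RE_plus e1 e2 => lang e1 w \/ lang e2 w
  | RE_star e1 => exists ws : seq (seq X),
      w = flatten ws /\ (forall k, k < size ws -> lang e1 (nth [::] ws k))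
  end.

Record ISRL (m : nat) (Var : finType) := {
  Loc : 'I_m.+1 -> finType;
  init : forall i, Loc i;
  Act : 'I_m.+1 -> finType;
  Prot : forall i, Loc i -> {set Act i};
  trans : forall i, Loc i -> (forall j, Act j) -> Loc i -> Prop;
  lam : Var -> regex (forall i, Loc i)
}.

Section Model.
Variables (m : nat) (Var : finType) (IS : ISRL m Var).

Definition Gst := forall i, Loc IS i.
Definition g0 : Gst := init IS.

Definition tG (g g' : Gst) : Prop :=
  exists a : forall j, Act IS j,
    forall i, a i \in @Prot m Var IS i (g i) /\ @trans m Var IS i (g i) a (g' i).

Fixpoint chainP (T : Type) (R : T -> T -> Prop) (x : T) (s : seq T) : Prop :=
  match s with
  | [::] => True
  | y :: s' => R x y /\ chainP R y s'
  end.

(* states of the model: nonempty runs g_0 ... g_k from the initial state *)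
Definition is_state (s : seq Gst) : Prop :=
  match s with
  | [::] => False
  | g :: r => g = g0 /\ chainP tG g r
  end.

Definition tS (s s' : seq Gst) : Prop :=
  size s' = (size s).+1 /\ take (size s) s' = s.

Definition gs (s : seq Gst) : Gst := last g0 s.

Definition simS (i : 'I_m.+1) (s s' : seq Gst) : Prop := gs s i = gs s' i.

Definition interval := seq (seq Gst).
Definition is_interval (I : interval) : Prop :=
  match I with
  | [::] => False
  | s :: r => (forall k, k < size I -> is_state (nth [::] I k)) /\ chainP tS s r
  end.

Definition ifirst (I : interval) : seq Gst := head [::] I.
Definition ilast (I : interval) : seq Gst := last [::] I.
Definition gI (I : interval) : seq Gst := map gs I.
Definition ipi (I : interval) : bool := size I == 1.

Definition simI (i : 'I_m.+1) (I I' : interval) : Prop :=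
  size I = size I' /\ forall k, k < size I -> simS i (nth [::] I k) (nth [::] I' k).

Definition simG_step (Gam : {set 'I_m.+1}) (I I' : interval) : Prop :=
  exists2 i, i \in Gam & simI i I I'.

Inductive simGam (Gam : {set 'I_m.+1}) : interval -> interval -> Prop :=
| simGam_step I J : is_interval I -> is_interval J -> simG_step Gam I J ->
    simGam Gam I J
| simGam_trans I J K : simGam Gam I J -> simGam Gam J K -> simGam Gam I K.

Definition RA (I I' : interval) : Prop := ifirst I' = ilast I.
Definition RBbar (I I' : interval) : Prop :=
  exists I1, is_interval I1 /\ I' = I ++ I1.
Definition RN (I I' : interval) : Prop := tS (ilast I) (ifirst I').

Inductive modality :=
| MK of 'I_m.+1
| MC of {set 'I_m.+1}
| MA
| MB
| MN.

Inductive form :=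
| Fpi : form
| Fvar : Var -> form
| Fneg : form -> form
| Fand : form -> form -> form
| Fmod : modality -> form -> form.

Definition Rel (X : modality) : interval -> interval -> Prop :=
  match X with
  | MK i => simI i
  | MC Gam => simGam Gam
  | MA => RA
  | MB => RBbar
  | MN => RN
  end.

Definition universal (X : modality) : bool :=
  match X with MK _ | MC _ => true | _ => false end.

Fixpoint sat (phi : form) (I : interval) : Prop :=
  match phi with
  | Fpi => size I = 1
  | Fvar p => lang (lam IS p) (gI I)
  | Fneg psi => ~ sat psi I
  | Fand p1 p2 => sat p1 I /\ sat p2 I
  | Fmod X psi =>
      if universal X
      then forall J, is_interval J -> Rel X I J -> sat psi J
      else exists J, is_interval J /\ Rel X I J /\ sat psi J
  end.

(* A_I(p): the state of the minimal complete DFA for L(lambda(p)) reached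
   after reading g(I), represented canonically (Myhill-Nerode) by the
   residual language {u | g(I) u in L(lambda(p))}. *)
Definition aut_state (I : interval) (p : Var) : seq Gst -> Prop :=
  fun u => lang (lam IS p) (gI I ++ u).

Definition aut_eq (I I' : interval) : Prop :=
  forall p u, aut_state I p u <-> aut_state I' p u.

(* equality of root labels (g(first I), g(last I), pi(I), A_I) *)
Definition label_eq (I I' : interval) : Prop :=
  [/\ gs (ifirst I) = gs (ifirst I'), gs (ilast I) = gs (ilast I'),
      ipi I = ipi I' & aut_eq I I'].

(* equality of the children parts of MCT_I^phi and MCT_I'^phi: for every
   top-level subformula X psi, the sets {MCT_J^psi : I R_X J} and
   {MCT_J'^psi : I' R_X J'} coincide (J, J' ranging over intervals). *)
Fixpoint mct_children_eq (phi : form) (I I' : interval) : Prop :=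
  match phi with
  | Fpi | Fvar _ => True
  | Fneg psi => mct_children_eq psi I I'
  | Fand p1 p2 => mct_children_eq p1 I I' /\ mct_children_eq p2 I I'
  | Fmod X psi =>
      (forall J, is_interval J -> Rel X I J ->
         exists J', [/\ is_interval J', Rel X I' J', label_eq J J'
                      & mct_children_eq psi J J'])
      /\
      (forall J', is_interval J' -> Rel X I' J' ->
         exists J, [/\ is_interval J, Rel X I J, label_eq J J'
                     & mct_children_eq psi J J'])
  end.

Definition mct_eq (phi : form) (I I' : interval) : Prop :=
  label_eq I I' /\ mct_children_eq phi I I'.

End Model.

From mathcomp Require Import all_boot.

(* The root label fixes the atoms: [pi] is read off
   [pi(I)], and [p] holds at [I] iff the empty word is in the residual
   [A_I(p)].  At a modality [X psi], the equality of the sets of children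
   trees is a back-and-forth condition between the [R_X]-successors of [I] and
   of [I'], along which [psi] transfers by the induction hypothesis. *)

Section ModalContextTree.
Variables (m : nat) (Var : finType) (IS : ISRL m Var).

Implicit Types (I J : interval IS) (psi : form m Var).

Lemma label_eq_sat_pi I I' :
  label_eq I I' -> sat (@Fpi m Var) I <-> sat (@Fpi m Var) I'.
Proof.
rewrite /label_eq /ipi => -[_ _ eq_pi _] /=.
by split=> /eqP size1; apply/eqP; rewrite ?eq_pi // -eq_pi.
Qed.

Lemma aut_eq_sat_var I I' (p : Var) :
  aut_eq I I' -> sat (Fvar m p) I <-> sat (Fvar m p) I'.
Proof. by move=> /(_ p [::]); rewrite /aut_state !cats0. Qed.

Lemma mct_children_eq_sat_mod X psi I I' :
  (forall J J', mct_eq psi J J' -> sat psi J <-> sat psi J') ->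
  mct_children_eq (Fmod X psi) I I' ->
  sat (Fmod X psi) I <-> sat (Fmod X psi) I'.
Proof.
move=> IH [forth back] /=; case: (universal X); split.
- move=> sat_succ J' iJ' RJ'; have [J [iJ RJ lJ cJ]] := back J' iJ' RJ'.
  by apply/(IH J J' (conj lJ cJ))/sat_succ.
- move=> sat_succ J iJ RJ; have [J' [iJ' RJ' lJ cJ]] := forth J iJ RJ.
  by apply/(IH J J' (conj lJ cJ))/sat_succ.
- case=> J [iJ [RJ sJ]]; have [J' [iJ' RJ' lJ cJ]] := forth J iJ RJ.
  by exists J'; do 2!split=> //; apply/(IH J J' (conj lJ cJ)).
- case=> J' [iJ' [RJ' sJ']]; have [J [iJ RJ lJ cJ]] := back J' iJ' RJ'.
  by exists J; do 2!split=> //; apply/(IH J J' (conj lJ cJ)).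
Qed.

Lemma mct_eq_sat psi I I' : mct_eq psi I I' -> sat psi I <-> sat psi I'.
Proof.
elim: psi I I' => [|p|psi IH|p1 IH1 p2 IH2|X psi IH] I I' [lab children].
- exact: label_eq_sat_pi.
- by case: lab => _ _ _; apply: aut_eq_sat_var.
- by have := IH I I' (conj lab children); rewrite /=; tauto.
- case: children => c1 c2.
  have := IH1 I I' (conj lab c1); have := IH2 I I' (conj lab c2).
  by rewrite /=; tauto.
- exact: mct_children_eq_sat_mod.
Qed.

End ModalContextTree.

Theorem mainTheorem10 (m : nat) (Var : finType) (IS : ISRL m Var)
  (phi : form m Var) (I I' : interval IS) :
  is_interval I -> is_interval I' -> mct_eq phi I I' ->
  (sat phi I <-> sat phi I').
Proof. by move=> _ _; apply: mct_eq_sat. Qed.
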